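(* As formal power series in $z$ with coefficients polynomials in $t$, \[ F(t,z)=\sum_{n\ge 0}\sum_{w\in S_n} t^{\operatorname{dep}(w)} z^n = \cfrac{1}{1 - \cfrac{z}{1 - \cfrac{tz}{1 - \cfrac{2tz}{1 - \cfrac{2t^2 z}{1 - \cfrac{3t^2 z}{1 - \cfrac{3t^3 z}{1-\cdots}}}}}}}, \] the $S$-fraction in which, numbering the partial numerators $c_0 z, c_1 z, c_2 z,\dots$ starting from $c_0 z = z$, one has $c_{2k}=(k+1)t^k$ and $c_{2k+1}=(k+1)t^{k+1}$ for all $k\ge 0$.
   Context: $S_0$ consists of the single empty permutation, of depth $0$. For $w\in S_n$, the depth is $\operatorname{dep}(w)=\sum_{i:\,w(i)>i}(w(i)-i)$, i.e. half the total displacement $\sum_{i=1}^n |w(i)-i|$. *)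

From HB Require Import structures.
From mathcomp Require Import all_boot all_order all_algebra all_fingroup.
Set Implicit Arguments. Unset Strict Implicit. Unset Printing Implicit Defensive.
Import GRing.Theory.
Local Open Scope ring_scope.

(* Depth of a permutation w of {0,..,n-1} (0-indexed; same value as 1-indexed):
   dep(w) = sum_{i : w(i) > i} (w(i) - i). *)
Definition dep n (w : 'S_n) : nat :=
  (\sum_(i : 'I_n | (i < w i)%N) (w i - i))%N.

Definition depth_gen (n : nat) : {poly int} := \sum_(w : 'S_n) 'X^(dep w).

(* Coefficients of the S-fraction: c_{2k} = (k+1) t^k, c_{2k+1} = (k+1) t^(k+1). *)
Definition cfcoef (j : nat) : {poly int} := (j./2).+1%:R *: 'X^(j./2 + odd j).

(* Power series in z with coefficients in Z[t] are handled modulo z^m, as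
   polynomials in z ({poly {poly int}}). For q with zero constant term,
   geom_inv m q = sum_{k<m} q^k is the inverse of (1 - q) modulo z^m. *)
Definition geom_inv (m : nat) (q : {poly {poly int}}) : {poly {poly int}} :=
  \sum_(k < m) q ^+ k.

(* Depth-N convergent of the S-fraction started at level j, modulo z^m:
   T_j = 1 / (1 - c_j z T_{j+1}), with the tail at depth N replaced by 1
   (i.e. c_{j+N} z and beyond set to 0). *)
Fixpoint sfrac (m : nat) (c : nat -> {poly int}) (N j : nat) : {poly {poly int}} :=
  match N with
  | 0 => 1
  | N'.+1 => geom_inv m ((c j)%:P * 'X * sfrac m c N' j.+1)
  end.

(* Both sides obey the same three-term recurrence.  The coefficient of z^n
   in an S-fraction with coefficients c_0, c_1, ... is the total weight of the
   Dyck paths of length 2n in which a down step from height h+1 to h weighs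
   c_h (Flajolet); for the convergents this follows from the identity
   W_(k+1) = W_k + c_k z W_(k+2) for the products W_k = T_0 ... T_(k-1) of the
   tails.  Read two steps at a time between even heights, the paths of this
   S-fraction satisfy
     D_(a+1)(2j) = D_a(2j-2) + (2j+1) t^j D_a(2j) + (j+1)^2 t^(2j+1) D_a(2j+2).
   On the permutation side, restrict w to partial injections of [0, a) into
   itself, a = 0, ..., n.  The depth of w is the sum over the gaps between b
   and b+1 of the number of arcs i |-> w i crossing the gap, which is the
   number j of unused points of the restriction to [0, b+1).  A partial
   injection of [0, a] with j unused points arises in 1, 2j+1 and (j+1)^2
   ways from one of [0, a) with j-1, j and j+1 unused points, each step
   contributing t^j: this is the path recurrence conjugated by t^C(j+1,2). *)

From HB Require Import structures.
From mathcomp Require Import all_boot all_order all_algebra all_fingroup.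
From mathcomp Require Import ring zify.
Set Implicit Arguments. Unset Strict Implicit. Unset Printing Implicit Defensive.
Import GRing.Theory.
Local Open Scope ring_scope.

Definition eqmodz (R : nzRingType) m (p q : {poly R}) := forall i, (i < m)%N -> p`_i = q`_i.

Lemma eqmodzMr (R : nzRingType) m (p q r : {poly R}) : eqmodz m p q -> eqmodz m (p * r) (q * r).
Proof.
move=> eqpq i ltim; rewrite !coefM; apply: eq_bigr => j _.
by rewrite eqpq //; have := ltn_ord j; lia.
Qed.

Lemma coef_cX (R : nzRingType) (a : R) (p : {poly R}) i :
  (a%:P * 'X * p)`_i = if i is i'.+1 then a * p`_i' else 0.
Proof. by rewrite -mulrA coefCM coefXM; case: i => [|i] /=; rewrite ?mulr0. Qed.

Lemma geom_invE m (q : {poly {poly int}}) :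
  eqmodz m (geom_inv m ('X * q)) (1 + 'X * q * geom_inv m ('X * q)).
Proof.
move=> i ltim; set G := geom_inv m _.
have GE : G = 1 + 'X * q * G - ('X * q) ^+ m.
  have := subrX1 ('X * q) m; rewrite -/(geom_inv m _) -/G => XmE.
  apply/eqP; rewrite -subr_eq0; apply/eqP.
  have -> : G - (1 + 'X * q * G - ('X * q) ^+ m) = ('X * q) ^+ m - 1 - ('X * q - 1) * G
    by ring.
  by rewrite XmE subrr.
by rewrite {1}GE coefB exprMn coefXnM ltim subr0.
Qed.

Section Flajolet.
Variable c : nat -> {poly int}.

(* [dyck m k] is the total weight of the lattice paths of [m] up/down steps
   from height 0 to height [k], a down step from height [h.+1] to [h] having
   weight [c h]. *)
Fixpoint dyck (m k : nat) : {poly int} :=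
  match m with
  | 0 => (k == 0%N)%:R
  | m'.+1 => (if k is k'.+1 then dyck m' k' else 0) + c k * dyck m' k.+1
  end.

Lemma dyck_eq0 m k : (m < k)%N -> dyck m k = 0.
Proof.
elim: m k => [|m IHm] [|k] //= ltmk.
by rewrite !IHm ?mulr0 ?addr0 //; lia.
Qed.

Lemma dyck_nn k : dyck k k = 1.
Proof. by elim: k => [|k IHk] //=; rewrite IHk dyck_eq0 ?mulr0 ?addr0. Qed.

Definition sfrac_prod m N k := \prod_(i < k) sfrac m c (N - i) i.

(* Since [T_k = 1 + c_k z T_k T_(k+1)] modulo [z^m]. *)
Lemma sfrac_prodS m N k : (k < N)%N ->
  eqmodz m (sfrac_prod m N k.+1) (sfrac_prod m N k + (c k)%:P * 'X * sfrac_prod m N k.+2).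
Proof.
move=> ltkN; rewrite /sfrac_prod !big_ord_recr /=.
have -> : (N - k = (N - k.+1).+1)%N by lia.
rewrite /=; set T := sfrac m c (N - k.+1) k.+1; set W := \prod_(i < k) _.
rewrite [_ * 'X * T](_ : _ = 'X * ((c k)%:P * T)); last by ring.
set G := geom_inv m _ => i ltim.
rewrite [W * G]mulrC (eqmodzMr W (@geom_invE m _) ltim) -/G.
by apply: (congr1 (fun p : {poly {poly int}} => p`_i)); ring.
Qed.

Lemma coef_sfrac_prodS m N k i : (k < N)%N -> (i < m)%N ->
  (sfrac_prod m N k.+1)`_i =
  (sfrac_prod m N k)`_i + (if i is i'.+1 then c k * (sfrac_prod m N k.+2)`_i' else 0).
Proof. by move=> ltkN ltim; rewrite (sfrac_prodS ltkN ltim) coefD coef_cX. Qed.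

Lemma coef_sfrac_prod0 m N i : (sfrac_prod m N 0)`_i = (i == 0%N)%:R.
Proof. by rewrite /sfrac_prod big_ord0 coef1. Qed.

Lemma coef_sfrac_prod n N i k : (n < N)%N -> (i + k <= n)%N ->
  (sfrac_prod n.+1 N k.+1)`_i = dyck (i.*2 + k) k.
Proof.
move=> ltnN; elim: i k => [|i IHi]; elim=> [|k IHk] le_n.
- by rewrite coef_sfrac_prodS ?coef_sfrac_prod0 ?addr0 //; lia.
- by rewrite coef_sfrac_prodS ?addr0 ?IHk ?add0n ?dyck_nn //; lia.
- rewrite coef_sfrac_prodS ?coef_sfrac_prod0 ?IHi; try lia.
  by rewrite addn0 addn1 doubleS.
- rewrite coef_sfrac_prodS ?IHi ?IHk; try lia.
  have -> : (i.+1.*2 + k.+1 = (i.+1.*2 + k).+1)%N by lia.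
  by have -> : (i.*2 + k.+2 = i.+1.*2 + k)%N by rewrite doubleS; lia.
Qed.

Lemma coef_sfrac n N : (n < N)%N -> (sfrac n.+1 c N 0)`_n = dyck n.*2 0.
Proof.
move=> ltnN; have := @coef_sfrac_prod n N n 0 ltnN (eq_leq (addn0 n)).
by rewrite addn0 /sfrac_prod big_ord1 subn0.
Qed.

End Flajolet.

Lemma cfcoef_even j : cfcoef j.*2 = (j.+1)%:R *: ('X^j : {poly int}).
Proof. by rewrite /cfcoef half_double odd_double addn0. Qed.

Lemma cfcoef_odd j : cfcoef j.*2.+1 = (j.+1)%:R *: ('X^(j.+1) : {poly int}).
Proof. by rewrite /cfcoef /= uphalf_double odd_double addn1. Qed.

Lemma dyck_cfcoef_even m j : dyck cfcoef m.+2 j.*2 =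
  (if j is j'.+1 then dyck cfcoef m j'.*2 else 0)
  + (j.*2.+1)%:R * 'X^j * dyck cfcoef m j.*2
  + (j.+1 * j.+1)%:R * ('X^j * 'X^(j.+1)) * dyck cfcoef m j.+1.*2.
Proof.
case: j => [|j].
  rewrite /= (cfcoef_even 0) (cfcoef_odd 0) -!mul_polyC !polyC_natr expr0 ?double0.
  ring.
rewrite [in LHS]doubleS /= cfcoef_odd -!doubleS cfcoef_even cfcoef_odd.
rewrite -!mul_polyC !polyC_natr natrM.
have -> : (j.+1.*2.+1)%:R = (j.+1)%:R + (j.+2)%:R :> {poly int}.
  by rewrite -natrD; congr _%:R; lia.
ring.
Qed.

Lemma big_option_nat (T : finType) (F : option T -> nat) :
  (\sum_(x : option T) F x = F None + \sum_(v : T) F (Some v))%N.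
Proof.
rewrite (bigD1 None) //=; congr (_ + _)%N.
rewrite (reindex_omap Some (fun o => o)) => [|[v|] //].
by apply: eq_bigl => v; rewrite eqxx.
Qed.

Lemma card_sum_bool (T : finType) (P : pred T) : #|P| = (\sum_(i : T) (P i : nat))%N.
Proof.
rewrite -sum1_card big_mkcond; apply: eq_bigr => i _.
by rewrite unfold_in; case: (P i).
Qed.

Lemma sum_bool_andr (T : finType) (P : pred T) (E : bool) :
  (\sum_(i : T) ((P i && E) : nat) = E * #|P|)%N.
Proof.
rewrite card_sum_bool; case: E; last by rewrite mul0n big1 // => i _; rewrite andbF.
by rewrite mul1n; apply: eq_bigr => i _; rewrite andbT.
Qed.

Section PartialInjections.
Variable n : nat.
Local Notation pfun := {ffun 'I_n -> option 'I_n}.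

Definition some_lt (b : nat) (o : option 'I_n) : bool :=
  if o is Some v then (v < b)%N else false.

Definition pinj (a : nat) (f : pfun) : bool :=
  [forall i, (f i != None) ==> ((i < a)%N && some_lt a (f i))] &&
  [forall i, forall j, (f i != None) ==> (f i == f j) ==> (i == j)].

Lemma pinjP a (f : pfun) : reflect
  ((forall i v, f i = Some v -> (i < a)%N /\ (v < a)%N) /\
   (forall i j v, f i = Some v -> f j = Some v -> i = j)) (pinj a f).
Proof.
apply: (iffP andP) => [[/forallP f_dom /forallP f_inj]|[f_dom f_inj]]; split.
- by move=> i v fi; have := f_dom i; rewrite fi /= => /andP[-> ->].
- move=> i j v fi fj; have /forallP/(_ j) := f_inj i.
  by rewrite fi fj eqxx /= => /eqP.
- apply/forallP => i; case fi: (f i) => [v|] //=.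
  by have [-> ->] := f_dom _ _ fi.
- apply/forallP => i; apply/forallP => j; case fi: (f i) => [v|] //=.
  by apply/implyP => /eqP fj; apply/eqP; apply: (f_inj _ _ v).
Qed.

Definition ninner (b : nat) (f : pfun) : nat :=
  #|[pred i : 'I_n | (i < b)%N && some_lt b (f i)]|.

(* The depth counted gap by gap: the [b]-th term is the number of [i <= b]
   whose image is not in [[0, b]]; for a permutation [w] it is
   [#|{i | i <= b < w i}|]. *)
Definition pdepth (a : nat) (f : pfun) : nat :=
  (\sum_(b < a) (b.+1 - ninner b.+1 f))%N.

(* Generating polynomial, by depth, of the partial injections of [[0, a)]
   into itself leaving [j] arguments (equivalently [j] values) unused. *)
Definition pinj_gen (a j : nat) : {poly int} :=
  \sum_(f : pfun | pinj a f && (a - ninner a f == j)%N) 'X^(pdepth a f).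

Definition restrict (a : nat) (f : pfun) : pfun :=
  [ffun i : 'I_n => if (i < a)%N && some_lt a (f i) then f i else None].

Lemma ninner_restrict a b (f : pfun) : (b <= a)%N -> ninner b (restrict a f) = ninner b f.
Proof.
move=> leba; apply: eq_card => i /=; rewrite !inE ffunE.
case: (ltnP i b) => //= ltib; case: (f i) => [v|] /=; last by rewrite andbF.
case: (ltnP v b) => ltvb; first by rewrite (leq_trans ltib leba) (leq_trans ltvb leba).
by case: ifP => //= _; rewrite ltnNge ltvb.
Qed.

Lemma pdepthS a (f : pfun) :
  pdepth a.+1 f = (pdepth a (restrict a f) + (a.+1 - ninner a.+1 f))%N.
Proof.
rewrite /pdepth big_ord_recr /=; congr (_ + _)%N.
by apply: eq_bigr => b _; rewrite ninner_restrict.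
Qed.

Lemma pinj_restrict a (f : pfun) : pinj a.+1 f -> pinj a (restrict a f).
Proof.
move=> /pinjP [_ f_inj]; apply/pinjP; split => [i v|i j v]; rewrite !ffunE.
  by case: ifP => // /andP[ltia]; case: (f i) => //= w ltwa [<-].
case: ifP => // _ fi; case: ifP => // _ fj; exact: f_inj fi fj.
Qed.

Lemma ninnerE a (f : pfun) : pinj a f -> ninner a f = #|[pred i | f i != None]|.
Proof.
move=> /pinjP [f_dom _]; apply: eq_card => i; rewrite !inE.
case fi: (f i) => [v|] /=; last by rewrite andbF.
by have [-> ->] := f_dom _ _ fi.
Qed.

Lemma card_ord_lt c : (c <= n)%N -> #|[pred i : 'I_n | (i < c)%N]| = c.
Proof.
move=> lecn; rewrite -sum1_card.
rewrite -[RHS]card_ord -sum1_card (big_ord_widen _ (fun _ => 1%N) lecn).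
by apply: eq_bigl.
Qed.

Lemma ninner_le a (f : pfun) : (a <= n)%N -> (ninner a f <= a)%N.
Proof.
move=> lean; rewrite -{2}(card_ord_lt lean); apply: subset_leq_card.
by apply/subsetP => i /= /andP[].
Qed.

Definition pinv (g : pfun) (v : 'I_n) : option 'I_n := [pick i | g i == Some v].

Lemma pinv_some (g : pfun) v i : pinv g v = Some i -> g i = Some v.
Proof. by rewrite /pinv; case: pickP => // j /eqP gj [<-]. Qed.

Lemma pinv_none (g : pfun) v : pinv g v = None -> forall i, g i != Some v.
Proof. by rewrite /pinv; case: pickP => // gN _ i; rewrite gN. Qed.

Lemma pinv_noneI (g : pfun) v : (forall i, g i != Some v) -> pinv g v = None.
Proof. by move=> gN; rewrite /pinv; case: pickP => // i; rewrite (negbTE (gN i)). Qed.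

Lemma pinvE (g : pfun) v i : (forall i j, g i = Some v -> g j = Some v -> i = j) ->
  g i = Some v -> pinv g v = Some i.
Proof.
move=> g_inj gi; rewrite /pinv; case: pickP => [j /eqP gj|gN].
  by rewrite (g_inj _ _ gj gi).
by have := gN i; rewrite gi eqxx.
Qed.

Section Extension.
Variable a : 'I_n.

Definition extend (f : pfun) (x y : option 'I_n) : pfun :=
  [ffun i => if i == a then x else if y == Some i then Some a else f i].

Definition extendable (f : pfun) (x y : option 'I_n) : bool :=
  match x, y with
  | None, None => true
  | Some v, None => (v < a)%N && (pinv f v == None)
  | None, Some p => (p < a)%N && (f p == None)
  | Some v, Some p => ((v == a) && (p == a)) ||
                      [&& (v < a)%N, pinv f v == None, (p < a)%N & f p == None]
  end.

Lemma pinj_a (f : pfun) : pinj a f -> f a = None.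
Proof.
move=> /pinjP [f_dom _]; case fa: (f a) => [v|] //.
by have [] := f_dom _ _ fa; rewrite ltnn.
Qed.

Lemma extend_a f x y : extend f x y a = x.
Proof. by rewrite ffunE eqxx. Qed.

Lemma extend_some f x y i v : extend f x y i = Some v ->
  [\/ i = a /\ x = Some v, i != a /\ y = Some i /\ v = a |
      [/\ i != a, y != Some i & f i = Some v]].
Proof.
rewrite ffunE; case: eqP => [->|/eqP neia]; first by constructor 1.
case: eqP => [yi [<-]|/eqP nyi fi]; first by constructor 2.
by constructor 3.
Qed.

Section Extendable.
Variables (f : pfun) (x y : option 'I_n).
Hypothesis ext_xy : extendable f x y.

Lemma extendable_img v : x = Some v -> v = a \/ ((v < a)%N /\ pinv f v = None).
Proof.
move: ext_xy => + xv; rewrite xv; case: y => [p|] /=.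
  by case/orP => [/andP[/eqP -> _]|/and4P[? /eqP ? _ _]]; [left|right].
by case/andP => ? /eqP ?; right.
Qed.

Lemma extendable_img_a : x = Some a -> y = Some a.
Proof.
move: ext_xy => + xa; rewrite xa; case: y => [p|] /=; last by rewrite ltnn.
by case/orP => [/andP[_ /eqP -> //]|/and4P[]]; rewrite ltnn.
Qed.

Lemma extendable_arg p : y = Some p -> p = a \/ ((p < a)%N /\ f p = None).
Proof.
move: ext_xy => + yp; rewrite yp; case: x => [w|] /=.
  by case/orP => [/andP[_ /eqP -> ]|/and4P[_ _ ? /eqP ?]]; [left|right].
by case/andP => ? /eqP ?; right.
Qed.

Lemma extendable_arg_a : y = Some a -> x = Some a.
Proof.
move: ext_xy => + ya; rewrite ya; case: x => [w|] /=; last by rewrite ltnn.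
by case/orP => [/andP[/eqP -> //]|/and4P[]]; rewrite ltnn.
Qed.

End Extendable.

Lemma pinj_extend f x y : pinj a f -> extendable f x y -> pinj a.+1 (extend f x y).
Proof.
move=> pinj_f ext_xy; have /pinjP [f_dom f_inj] := pinj_f.
have f_img i v : f i = Some v -> (v < a)%N by move=> /f_dom [].
apply/pinjP; split.
- move=> i v /extend_some [[-> xv]|[neia [yi ->]]|[neia _ fi]].
  + by case: (extendable_img ext_xy xv) => [->|[]]; lia.
  + by case: (extendable_arg ext_xy yi) => [ia|[]]; [move: neia; rewrite ia eqxx|lia].
  + by have [] := f_dom _ _ fi; lia.
- move=> i j v /extend_some [[-> xv]|[neia [yi ->]]|[neia yi fi]]
              /extend_some [[-> xv']|[neja [yj vE]]|[neja yj fj]] //.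
  + move: (extendable_img_a ext_xy); rewrite xv vE yj => /(_ erefl) [ja].
    by move: neja; rewrite ja eqxx.
  + case: (extendable_img ext_xy xv) => [va|[_ fvN]].
      by have := f_img _ _ fj; rewrite va ltnn.
    by have := pinv_none fvN j; rewrite fj eqxx.
  + move: (extendable_img_a ext_xy xv'); rewrite yi => -[ia].
    by move: neia; rewrite ia eqxx.
  + by move: yj; rewrite yi => -[].
  + by have := f_img _ _ fj; rewrite ltnn.
  + case: (extendable_img ext_xy xv') => [va|[_ fvN]].
      by have := f_img _ _ fi; rewrite va ltnn.
    by have := pinv_none fvN i; rewrite fi eqxx.
  + by have := f_img _ _ fi; rewrite vE ltnn.
  + exact: f_inj fi fj.
Qed.

Lemma ltn_neq_ord (i : 'I_n) : (i < a.+1)%N -> i != a -> (i < a)%N.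
Proof. by move=> ltia neia; rewrite ltn_neqAle -ltnS ltia andbT. Qed.

Lemma restrict_some (g : pfun) i v : restrict a g i = Some v -> g i = Some v /\ (i < a)%N.
Proof. by rewrite ffunE; case: ifP => // /andP[-> _]. Qed.

Lemma restrict_pinv_a (g : pfun) p : g p = Some a -> restrict a g p = None.
Proof. by rewrite ffunE => ->; rewrite /= ltnn andbF. Qed.

Lemma restrict_extend f x y : pinj a f -> extendable f x y -> restrict a (extend f x y) = f.
Proof.
move=> pinj_f ext_xy; have /pinjP [f_dom _] := pinj_f.
apply/ffunP => i; rewrite ffunE.
case fi: (f i) => [v|].
  have [ltia ltva] := f_dom _ _ fi.
  have -> : extend f x y i = Some v.
    rewrite ffunE ifN; last by apply: contraTneq ltia => ->; rewrite ltnn.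
    case: eqP => [yi|//]; case: (extendable_arg ext_xy yi) => [ia|[_ fiN]].
      by move: ltia; rewrite ia ltnn.
    by move: fi; rewrite fiN.
  by rewrite ltia /= ltva.
case: ifP => // /andP[ltia]; case ei: (extend f x y i) => [w|] //= ltwa.
case/extend_some: ei => [[ia _]|[_ [_ wa]]|[_ _ fi']].
- by move: ltia; rewrite ia ltnn.
- by move: ltwa; rewrite wa ltnn.
- by move: fi; rewrite fi'.
Qed.

Lemma pinv_extend f x y : pinj a f -> extendable f x y -> pinv (extend f x y) a = y.
Proof.
move=> pinj_f ext_xy; have /pinjP [f_dom _] := pinj_f.
have /pinjP [_ e_inj] := pinj_extend pinj_f ext_xy.
case yE: y => [p|]; rewrite -[in extend _ _ _]yE.
  apply: (pinvE (fun i j => e_inj i j a)).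
  rewrite ffunE; case: eqP => [pa|_]; last by rewrite yE eqxx.
  by apply: (extendable_arg_a ext_xy); rewrite yE pa.
apply: pinv_noneI => i; apply/eqP => /extend_some [[_ xa]|[_ [yi _]]|[_ _ fi]].
- by move: (extendable_img_a ext_xy xa); rewrite yE.
- by move: yi; rewrite yE.
- by have [_] := f_dom _ _ fi; rewrite ltnn.
Qed.

Lemma extend_restrict (g : pfun) : pinj a.+1 g -> extend (restrict a g) (g a) (pinv g a) = g.
Proof.
move=> /pinjP [g_dom g_inj]; apply/ffunP => i; rewrite ffunE.
case: eqP => [->//|/eqP neia].
case: eqP => [gi|ngi]; first by rewrite (pinv_some gi).
rewrite ffunE; case gi: (g i) => [v|]; last by rewrite if_same.
have [ltia ltva] := g_dom _ _ gi.
rewrite (ltn_neq_ord ltia neia) /=.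
case: (eqVneq v a) => [va|neva]; last by rewrite (ltn_neq_ord ltva neva).
by case: ngi; apply: pinvE; [move=> ? ?; apply: g_inj|rewrite gi va].
Qed.

Lemma extendable_restrict (g : pfun) :
  pinj a.+1 g -> extendable (restrict a g) (g a) (pinv g a).
Proof.
move=> /pinjP [g_dom g_inj].
have pinvN v : g a = Some v -> pinv (restrict a g) v == None.
  move=> gav; apply/eqP/pinv_noneI => i; apply/eqP => /restrict_some [gi ltia].
  by move: ltia; rewrite (g_inj _ _ _ gi gav) ltnn.
have g_inj_a i j : g i = Some a -> g j = Some a -> i = j by apply: g_inj.
case ga: (g a) => [v|]; case pa: (pinv g a) => [p|] /=.
- have gp := pinv_some pa; have [ltpa _] := g_dom _ _ gp; have [_ ltva] := g_dom _ _ ga.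
  case: (eqVneq p a) => [pE|nepa].
    by move: ga; rewrite -pE gp => -[<-]; rewrite pE eqxx.
  rewrite (ltn_neq_ord ltpa nepa) (pinvN _ ga) (restrict_pinv_a gp) eqxx !andbT andbF /=.
  apply: ltn_neq_ord ltva _; apply/eqP => va; move: ga; rewrite va => ga.
  by move: nepa; rewrite (g_inj_a _ _ gp ga) eqxx.
- have [_ ltva] := g_dom _ _ ga.
  rewrite (pinvN _ ga) andbT; apply: ltn_neq_ord ltva _; apply/eqP => va.
  by move: pa; rewrite (pinvE g_inj_a (etrans ga (congr1 Some va))).
- have gp := pinv_some pa; have [ltpa _] := g_dom _ _ gp.
  rewrite (restrict_pinv_a gp) eqxx andbT; apply: ltn_neq_ord ltpa _; apply/eqP => pE.
  by move: ga; rewrite -pE gp.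
- done.
Qed.

Definition nnew (x y : option 'I_n) : nat :=
  match x, y with
  | None, None => 0
  | Some v, Some p => if v == a then 1%N else 2%N
  | _, _ => 1%N
  end.

Lemma ninner_extend f x y : pinj a f -> extendable f x y ->
  ninner a.+1 (extend f x y) = (ninner a f + nnew x y)%N.
Proof.
move=> pinj_f ext_xy; rewrite (ninnerE (pinj_extend pinj_f ext_xy)) (ninnerE pinj_f).
have fa := pinj_a pinj_f.
set D := [pred i | f i != None].
have aD : a \notin D by rewrite inE fa.
have cardU1' (i : 'I_n) (A : pred 'I_n) : i \notin A -> #|[predU1 i & A]| = #|A|.+1.
  by move=> iA; rewrite cardU1 iA.
move: ext_xy; case: x => [v|]; case: y => [p|] /= ext_xy.
- case/orP: ext_xy => [/andP[/eqP va /eqP pa]|/and4P[ltva _ ltpa /eqP fp]].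
    rewrite va eqxx addn1 -(cardU1' a) //; apply: eq_card => i; rewrite !inE ffunE.
    case: (eqVneq i a) => [->|neia] //=; rewrite pa.
    by case: (eqVneq (Some a) (Some i)) => [[ai]|_] //; rewrite ai eqxx in neia.
  have -> : (v == a) = false by apply/negbTE; apply: contraTneq ltva => ->; rewrite ltnn.
  have nepa : p != a by apply: contraTneq ltpa => ->; rewrite ltnn.
  have pD : p \notin D by rewrite inE fp.
  rewrite addn2 -(cardU1' p) // -(cardU1' a); last by rewrite !inE eq_sym (negbTE nepa) fa.
  apply: eq_card => i; rewrite !inE ffunE.
  case: (eqVneq i a) => [->|neia] //=.
  case: (eqVneq (Some p) (Some i)) => [[<-]|nepi] /=; first by rewrite eqxx.
  by case: (eqVneq i p) => // ip; rewrite ip eqxx in nepi.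
- rewrite addn1 -(cardU1' a) //; apply: eq_card => i; rewrite !inE ffunE.
  by case: (eqVneq i a).
- case/andP: ext_xy => ltpa /eqP fp.
  have nepa : p != a by apply: contraTneq ltpa => ->; rewrite ltnn.
  have pD : p \notin D by rewrite inE fp.
  rewrite addn1 -(cardU1' p) //; apply: eq_card => i; rewrite !inE ffunE.
  case: (eqVneq i a) => [->|neia] /=; first by rewrite fa eq_sym (negbTE nepa).
  case: (eqVneq (Some p) (Some i)) => [[<-]|nepi] /=; first by rewrite eqxx.
  by case: (eqVneq i p) => // ip; rewrite ip eqxx in nepi.
- rewrite addn0; apply: eq_card => i; rewrite !inE ffunE.
  by case: (eqVneq i a) => // ->; rewrite fa.
Qed.

Lemma card_unused_args f : pinj a f ->
  #|[pred p : 'I_n | (p < a)%N && (f p == None)]| = (a - ninner a f)%N.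
Proof.
move=> pinj_f; have /pinjP [f_dom _] := pinj_f.
have splitE := cardID [pred p : 'I_n | f p != None] [pred p : 'I_n | (p < a)%N].
rewrite card_ord_lt ?(ltnW (ltn_ord a)) // in splitE; rewrite (ninnerE pinj_f).
have -> : #|[pred p : 'I_n | (p < a)%N && (f p == None)]| =
          #|[predD [pred p : 'I_n | (p < a)%N] & [pred p | f p != None]]|.
  by apply: eq_card => i; rewrite !inE andbC negbK.
have domE : #|[predI [pred p : 'I_n | (p < a)%N] & [pred p | f p != None]]| =
            #|[pred i | f i != None]|.
  apply: eq_card => i; rewrite !inE; case fi: (f i) => [v|] /=; last by rewrite andbF.
  by have [-> _] := f_dom _ _ fi.
by rewrite -[in RHS]splitE domE addKn; apply: eq_card => i; rewrite !inE.
Qed.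

Lemma card_unused_vals f : pinj a f ->
  #|[pred v : 'I_n | (v < a)%N && (pinv f v == None)]| = (a - ninner a f)%N.
Proof.
move=> pinj_f; have /pinjP [f_dom f_inj] := pinj_f.
have splitE := cardID [pred v : 'I_n | pinv f v != None] [pred p : 'I_n | (p < a)%N].
rewrite card_ord_lt ?(ltnW (ltn_ord a)) // in splitE; rewrite (ninnerE pinj_f).
set D := [pred i : 'I_n | f i != None].
have -> : #|[pred v : 'I_n | (v < a)%N && (pinv f v == None)]| =
          #|[predD [pred p : 'I_n | (p < a)%N] & [pred v | pinv f v != None]]|.
  by apply: eq_card => i; rewrite !inE andbC negbK.
have imgE : #|[predI [pred p : 'I_n | (p < a)%N] & [pred v | pinv f v != None]]| = #|D|.
  rewrite -(@card_in_imset _ _ (fun i => odflt i (f i)) D); last first.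
    move=> i j; rewrite !inE; case fi: (f i) => [v|] //; case fj: (f j) => [w|] //= _ _ vw.
    by apply: (f_inj _ _ v) => //; rewrite fj vw.
  apply: eq_card => v; rewrite !inE; apply/idP/imsetP.
    case/andP=> _; case pv: (pinv f v) => [i|] // _; exists i; last by rewrite (pinv_some pv).
    by rewrite inE (pinv_some pv).
  case=> i; rewrite inE; case fi: (f i) => [w|] //= _ ->.
  by rewrite (pinvE (fun a b => f_inj a b w) fi) andbT; have [] := f_dom _ _ fi.
by rewrite -[in RHS]splitE imgE addKn; apply: eq_card => i; rewrite !inE.
Qed.

Definition extensions f j := [pred xy : option 'I_n * option 'I_n |
  extendable f xy.1 xy.2 && (a.+1 - (ninner a f + nnew xy.1 xy.2) == j)%N].

Lemma card_fiber_restrict f j : pinj a f ->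
  #|[pred g | (pinj a.+1 g && (a.+1 - ninner a.+1 g == j)%N) && (restrict a g == f)]| =
  #|extensions f j|.
Proof.
move=> pinj_f.
have -> : #|[pred g | (pinj a.+1 g && (a.+1 - ninner a.+1 g == j)%N) && (restrict a g == f)]|
        = #|[set extend f xy.1 xy.2 | xy in extensions f j]|.
  apply: eq_card => g; rewrite !inE; apply/idP/imsetP.
  - case/andP => /andP [pinj_g gj] /eqP gf; exists (g a, pinv g a); last first.
      by rewrite /= -gf extend_restrict.
    have ext_g := extendable_restrict pinj_g; rewrite gf in ext_g.
    by rewrite inE /= ext_g /= -(ninner_extend pinj_f ext_g) -{1}gf extend_restrict.
  - case=> -[x y]; rewrite inE /= => /andP[ext_xy xyj] ->.
    by rewrite pinj_extend // restrict_extend // eqxx ninner_extend // xyj.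
rewrite card_in_imset // => -[x y] [x' y']; rewrite !inE /= => /andP[ext_xy _] /andP[ext_xy' _].
move=> eq_ext; rewrite -(extend_a f x y) eq_ext extend_a.
by rewrite -(pinv_extend pinj_f ext_xy) eq_ext (pinv_extend pinj_f ext_xy').
Qed.

(* The extensions adding no pair, one pair (the fixed point [a], or [a]
   paired on one side with one of the [k] unused points) or two pairs. *)
Definition nfiber k j := ((k.+1 == j) + j.*2.+1 * (k == j) + j.+1 * j.+1 * (k == j.+1))%N.

Lemma card_extensions f j : pinj a f -> #|extensions f j| = nfiber (a - ninner a f) j.
Proof.
move=> pinj_f; set k := (a - ninner a f)%N.
have le_a : (ninner a f <= a)%N by apply/ninner_le/ltnW.
set E0 := (a.+1 - ninner a f == j)%N.
set E1 := (a.+1 - (ninner a f + 1) == j)%N.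
set E2 := (a.+1 - (ninner a f + 2) == j)%N.
set vals := [pred v : 'I_n | (v < a)%N && (pinv f v == None)].
set args := [pred p : 'I_n | (p < a)%N && (f p == None)].
have card_args : #|args| = k by apply: card_unused_args.
have card_vals : #|vals| = k by apply: card_unused_vals.
have card_a : #|eq_op^~ a| = 1%N by rewrite -(card1 a); apply: eq_card => p; rewrite !inE.
have sum_None : (\sum_y (extensions f j (None, y) : nat) = E0 + E1 * k)%N.
  rewrite big_option_nat /= addn0; congr (_ + _)%N.
  by rewrite -card_args -sum_bool_andr; apply: eq_bigr => p _; rewrite !inE.
have sum_Some v : (\sum_y (extensions f j (Some v, y) : nat) =
     (vals v && E1) + ((v == a) && E1) + (vals v && E2) * k)%N.
  rewrite big_option_nat /= -addnA; congr (_ + _)%N.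
  transitivity (\sum_p (((p == a) && ((v == a) && E1)) + (args p && (vals v && E2)) : nat))%N.
    apply: eq_bigr => p _; rewrite !inE /=.
    case: (eqVneq v a) => [->|neva]; rewrite ?eqxx ?ltnn /=.
      by case: (p == a); rewrite /= ?andbF ?addn0.
    rewrite andbF add0n; do 2 case: (_ < _)%N; rewrite ?andbF //=.
    by case: (pinv f v == None); case: (f p == None).
  rewrite big_split /= !sum_bool_andr card_a muln1; congr (_ + _)%N.
  by rewrite -card_args; congr (_ * _)%N; apply: eq_card => p; rewrite !inE.
have -> : #|extensions f j| = (\sum_x \sum_y (extensions f j (x, y) : nat))%N.
  by rewrite card_sum_bool pair_bigA; apply: eq_bigr => -[x y] _.
rewrite big_option_nat sum_None.
under eq_bigr do rewrite sum_Some.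
rewrite !big_split /= -big_distrl /= !sum_bool_andr card_a.
have -> : #|(fun v : 'I_n => vals v)| = k.
  by rewrite -card_vals; apply: eq_card => p; rewrite !inE.
rewrite /nfiber /E0 /E1 /E2 /k; lia.
Qed.

End Extension.

Lemma pinj_genE a j :
  pinj_gen a j = \sum_(f | pinj a f) 'X^(pdepth a f) * ((a - ninner a f == j)%N)%:R.
Proof.
rewrite /pinj_gen big_mkcondr /=; apply: eq_bigr => f _.
by case: (_ == j); rewrite ?mulr1 ?mulr0.
Qed.

Lemma pinj_genS (a : 'I_n) j : pinj_gen a.+1 j = 'X^j * ((if j is j'.+1 then pinj_gen a j' else 0)
   + (j.*2.+1)%:R * pinj_gen a j + (j.+1 * j.+1)%:R * pinj_gen a j.+1).
Proof.
have predE : (if j is j'.+1 then pinj_gen a j' else 0) =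
    \sum_(f | pinj a f) 'X^(pdepth a f) * (((a - ninner a f).+1 == j)%N)%:R.
  case: j => [|j]; last by rewrite pinj_genE.
  by rewrite big1 // => f _; rewrite mulr0.
rewrite predE !(pinj_genE a).
transitivity (\sum_(g | pinj a.+1 g && (a.+1 - ninner a.+1 g == j)%N)
    ('X^(pdepth a (restrict a g)) * 'X^j : {poly int})).
  by apply: eq_bigr => g /andP[_ /eqP gj]; rewrite pdepthS exprD gj.
rewrite (partition_big (restrict a) (pinj a)) /=; last first.
  by move=> g /andP[pinj_g _]; apply: pinj_restrict.
transitivity (\sum_(f | pinj a f)
  ('X^(pdepth a f) * 'X^j : {poly int}) *+ nfiber (a - ninner a f) j).
  apply: eq_bigr => f pinj_f.
  rewrite (eq_bigr (fun _ => 'X^(pdepth a f) * 'X^j)); last by move=> g /andP[_ /eqP ->].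
  by rewrite sumr_const card_fiber_restrict ?card_extensions.
rewrite !mulr_sumr -!big_split /= mulr_sumr; apply: eq_bigr => f _.
rewrite /nfiber; ring.
Qed.

Lemma pinj0 (f : pfun) : pinj 0 f = (f == [ffun => None]).
Proof.
apply/pinjP/eqP => [[f_dom _]|->]; last by split => [i v|i j v]; rewrite ffunE.
apply/ffunP => i; rewrite ffunE; case fi: (f i) => [v|] //.
by have [] := f_dom _ _ fi.
Qed.

Lemma pinj_gen0 j : pinj_gen 0 j = (j == 0%N)%:R.
Proof.
rewrite pinj_genE (big_pred1 [ffun => None]) => [|f]; last by rewrite pinj0.
by rewrite /pdepth big_ord0 expr0 mul1r sub0n eq_sym.
Qed.

Lemma pinj_gen_dyck a j : (a <= n)%N ->
  pinj_gen a j = 'X^('C(j.+1, 2)) * dyck cfcoef a.*2 j.*2.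
Proof.
elim: a j => [|a IHa] j le_an.
  by rewrite pinj_gen0 /=; case: j => [|j]; rewrite ?expr0 ?mul1r ?doubleS ?mulr0.
have genS := pinj_genS (Ordinal le_an) j; rewrite /= in genS; rewrite {}genS.
rewrite (doubleS a) dyck_cfcoef_even.
case: j => [|j]; rewrite !IHa ?(ltnW le_an) //.
  by rewrite /= !expr0; ring.
have binS2 i : 'C(i.+2, 2) = ('C(i.+1, 2) + i.+1)%N by rewrite binS bin1.
by rewrite !binS2 !exprD; ring.
Qed.

Definition pinj_of_perm (w : 'S_n) : pfun := [ffun i => Some (w i)].

Lemma card_ord_range lo hi : (hi <= n)%N ->
  #|[pred b : 'I_n | (lo <= b)%N && (b < hi)%N]| = (hi - lo)%N.
Proof.
move=> lehn.
suff : (minn lo hi + #|[pred b : 'I_n | (lo <= b)%N && (b < hi)%N]| = hi)%N by lia.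
rewrite -[RHS](card_ord_lt lehn).
rewrite -(cardID [pred b : 'I_n | (b < lo)%N] [pred b : 'I_n | (b < hi)%N]).
congr (_ + _)%N; last by apply: eq_card => b; rewrite !inE -leqNgt andbC.
rewrite -(@card_ord_lt (minn lo hi)); last by rewrite geq_min lehn orbT.
by apply: eq_card => b; rewrite !inE leq_min andbC.
Qed.

Lemma pdepth_perm w : pdepth n (pinj_of_perm w) = dep w.
Proof.
rewrite /pdepth /dep.
transitivity (\sum_(b < n) #|[pred i : 'I_n | (i <= b)%N && (b < w i)%N]|)%N.
  apply: eq_bigr => b _.
  suff : (ninner b.+1 (pinj_of_perm w) +
          #|[pred i : 'I_n | (i <= b)%N && (b < w i)%N]| = b.+1)%N by lia.
  rewrite -[RHS](@card_ord_lt b.+1) //.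
  rewrite -(cardID [pred i : 'I_n | (w i < b.+1)%N] [pred i : 'I_n | (i < b.+1)%N]).
  congr (_ + _)%N; first by apply: eq_card => i; rewrite !inE ffunE.
  by apply: eq_card => i; rewrite !inE ltnS -ltnNge andbC.
transitivity (\sum_(i : 'I_n) (w i - i))%N; last first.
  rewrite [RHS]big_mkcond; apply: eq_bigr => i _; case: ltnP => // lewi.
  by apply/eqP; rewrite subn_eq0.
under eq_bigr do rewrite card_sum_bool.
rewrite exchange_big; apply: eq_bigr => i _.
by rewrite -card_sum_bool card_ord_range //; exact: ltnW (ltn_ord _).
Qed.

Lemma total_pinj_perm (f : pfun) : pinj n f -> ninner n f = n ->
  exists w : 'S_n, f = pinj_of_perm w.
Proof.
move=> pinj_f full_f; have /pinjP [_ f_inj] := pinj_f.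
have f_some i : f i != None.
  have domC := cardC [pred i | f i != None]; rewrite card_ord -(ninnerE pinj_f) full_f in domC.
  have /card0_eq/(_ i) : #|[predC [pred i | f i != None]]| = 0%N.
    by move: domC; rewrite -[RHS]addn0 => /addnI.
  by rewrite !inE => /negbFE.
pose g i := odflt i (f i).
have fg i : f i = Some (g i).
  by rewrite /g; case fi: (f i) => //; have := f_some i; rewrite fi.
have g_inj : injective g.
  by move=> i j gij; apply: (f_inj _ _ (g i)); rewrite // gij.
by exists (perm g_inj); apply/ffunP => i; rewrite ffunE permE fg.
Qed.

Lemma pinj_gen_perm : pinj_gen n 0 = depth_gen n.
Proof.
have pinj_permE f : (pinj n f && (n - ninner n f == 0)%N) =
    (f \in [set pinj_of_perm w | w in [set: 'S_n]]).
  apply/idP/imsetP.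
    case/andP=> pinj_f; rewrite subn_eq0 => le_n.
    have [|w ->] := total_pinj_perm pinj_f; last by exists w; rewrite ?in_setT.
    by apply/eqP; rewrite eqn_leq le_n ninner_le.
  case=> w _ ->; apply/andP; split.
    apply/pinjP; split => [i v|i j v]; rewrite !ffunE => -[<-]; first by split.
    by move=> [] /perm_inj.
  have -> : ninner n (pinj_of_perm w) = n.
    by rewrite -[RHS]card_ord; apply: eq_card => i; rewrite !inE ffunE /= !ltn_ord.
  by rewrite subnn.
rewrite /pinj_gen (eq_bigl _ _ pinj_permE) big_imset /=; last first.
  move=> w1 w2 _ _ /ffunP eq_w; apply/permP => i.
  by have := eq_w i; rewrite !ffunE => -[].
by apply: eq_big => [w|w _]; rewrite ?in_setT ?pdepth_perm.
Qed.

End PartialInjections.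

Theorem mainTheorem5 :
  forall n : nat, exists N0 : nat, forall N : nat, (N0 <= N)%N ->
    (sfrac n.+1 cfcoef N 0)`_n = depth_gen n.
Proof.
move=> n; exists n.+1 => N ltnN.
by rewrite coef_sfrac // -pinj_gen_perm pinj_gen_dyck // expr0 mul1r.
Qed.
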